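(* Let $R$ be a commutative Noetherian ring with unity such that $\Gamma_E(R)$ is finite and has more than two vertices. Then $\Gamma_E(R)$ is not a regular graph.
   Context: For $x,y\in R$ write $x\sim y$ iff $\operatorname{ann}(x)=\operatorname{ann}(y)$; $[x]$ denotes the equivalence class of $x$. Let $Z^*(R)$ be the set of nonzero zero divisors of $R$. The graph $\Gamma_E(R)$ is the simple graph whose vertices are the classes $[x]$ with $x\in Z^*(R)$, two distinct vertices $[x],[y]$ being adjacent iff $xy=0$. A graph is regular if all its vertices have the same degree. *)

From HB Require Import structures.
From mathcomp Require Import all_boot all_order all_algebra.
From mathcomp Require Import boolp classical_sets cardinality.
From mathcomp Require Import finmap.
Set Implicit Arguments. Unset Strict Implicit. Unset Printing Implicit Defensive.
Import GRing.Theory.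
Local Open Scope ring_scope.
Local Open Scope classical_set_scope.

Section ZeroDivisorGraph.
Variable R : comPzRingType.

Definition is_ideal (I : set R) : Prop :=
  I 0 /\ (forall x y, I x -> I y -> I (x - y)) /\ (forall r x, I x -> I (r * x)).

Definition noetherian : Prop :=
  forall I : nat -> set R, (forall n, is_ideal (I n)) ->
    (forall n, I n `<=` I n.+1) ->
    exists N : nat, forall n, (N <= n)%N -> I n = I N.

Definition ann (x : R) : set R := [set y | x * y = 0].

Definition zdivs : set R := [set x | x != 0 /\ exists y, y != 0 /\ x * y = 0].

Definition eclass (x : R) : set R := [set y | ann y = ann x].

Definition GE_vertices : set (set R) := eclass @` zdivs.

Definition GE_adj (U V : set R) : Prop :=
  U <> V /\ exists x y, zdivs x /\ zdivs y /\ U = eclass x /\ V = eclass y /\ x * y = 0.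

Definition GE_nbhd (U : set R) : set (set R) := [set V | GE_vertices V /\ GE_adj U V].

(* degree of a vertex (meaningful when the graph is finite) *)
Definition GE_degree (U : set R) : nat := #|` fset_set (GE_nbhd U)|%fset.

Definition GE_regular : Prop :=
  forall U V, GE_vertices U -> GE_vertices V -> GE_degree U = GE_degree V.

End ZeroDivisorGraph.
Arguments noetherian R : clear implicits.
Arguments zdivs R : clear implicits.
Arguments GE_vertices R : clear implicits.
Arguments GE_regular R : clear implicits.

(* Compare classes by inclusion of annihilators. If [ann a] lies strictly inside
   [ann b] with [b] maximal, regularity of the degrees at [a] and [b] forces every
   zero divisor outside [ann a] but killed by [b] into the class of [a]; from this,
   [ann a] squares to zero, [a b = 0], and every zero divisor is equivalent to [a]
   or to [b], so there are only two vertices. If instead no inclusion is proper,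
   zero divisors of distinct classes multiply to zero; given three classes, [x + y]
   is then a zero divisor forcing [x ^+ 2 = 0] or [y ^+ 2 = 0], and a zero divisor
   of square zero kills every zero divisor, so its class is the only one. *)
From mathcomp Require Import all_boot all_order all_algebra.
From mathcomp Require Import boolp classical_sets cardinality finmap.
Set Implicit Arguments. Unset Strict Implicit. Unset Printing Implicit Defensive.
Import GRing.Theory.
Local Open Scope ring_scope.
Local Open Scope classical_set_scope.

Lemma proper_sub_trans (T : Type) (A B C : set T) :
  A `<` B -> B `<=` C -> A `<` C.
Proof.
move=> [sAB nBA] sBC; split; first by move=> t /sAB /sBC.
by move=> sCA; apply: nBA => t /sBC /sCA.
Qed.

Lemma finite_maximal_above (T : Type) (F : set (set T)) (X : set T) :
  finite_set F -> F X ->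
  exists2 M, F M & X `<=` M /\ forall Y, F Y -> M `<=` Y -> Y = M.
Proof.
move=> finF FX; have [n ltFn] : exists n, (#|` fset_set F| < n)%N by exists #|` fset_set F|.+1.
elim: n F X finF FX ltFn => [|n IH] F X finF FX ltFn; first by rewrite ltn0 in ltFn.
have [[Y [FY ltXY]]|noY] := pselect (exists Y, F Y /\ X `<` Y); last first.
  exists X => //; split => // Y FY sXY; rewrite eqEsubset; split => //.
  by apply: contrapT => nYX; apply: noY; exists Y.
pose G := [set Z | F Z /\ X `<` Z].
have finG : finite_set G by apply: sub_finite_set finF => Z [].
have ltGF : (#|` fset_set G| < #|` fset_set F|)%N.
  have XF : X \in fset_set F by rewrite in_fset_set // mem_set.
  apply: leq_ltn_trans (fproper_ltn_card (fproperD1 XF)).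
  apply: fsubset_leq_card; apply/fsubsetP => Z.
  rewrite in_fsetD1 !in_fset_set // => /set_mem [FZ [sXZ nZX]].
  apply/andP; split; last exact: mem_set.
  by apply/eqP => ZX; apply: nZX; rewrite ZX.
have [M [FM ltXM] [sYM maxM]] := IH G Y finG (conj FY ltXY) (leq_trans ltGF ltFn).
exists M => //; split=> [|Z FZ sMZ]; first exact: properW.
by apply: maxM => //; split => //; apply: proper_sub_trans sMZ.
Qed.

Section FsetCard.
Local Open Scope fset_scope.

Lemma fsetD1_eq_of_card (K : choiceType) (X Y : {fset K}) (x y : K) :
  #|` X| = #|` Y| -> (y \in X) = (x \in Y) -> X `\ y `<=` Y `\ x ->
  X `\ y = Y `\ x.
Proof.
move=> cXY yx sub; apply/eqP; rewrite eqEfcard sub /=.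
by move: cXY; rewrite (cardfsD1 y X) (cardfsD1 x Y) yx => /addnI ->.
Qed.

Lemma card_gt2_fset (K : choiceType) (A : {fset K}) : (2 < #|` A|)%N ->
  exists x y z, [/\ x \in A, y \in A & z \in A] /\ [/\ x != y, x != z & y != z].
Proof.
move=> A3.
have [x xA] : exists x, x \in A.
  by apply/fset0Pn; rewrite -cardfs_gt0; apply: leq_trans A3.
have A2 : (1 < #|` A `\ x|)%N by move: A3; rewrite (cardfsD1 x) xA.
have [y yA] : exists y, y \in A `\ x.
  by apply/fset0Pn; rewrite -cardfs_gt0; apply: leq_trans A2.
have A1 : (0 < #|` A `\ x `\ y|)%N by move: A2; rewrite (cardfsD1 y) yA.
have [z zA] : exists z, z \in A `\ x `\ y by apply/fset0Pn; rewrite -cardfs_gt0.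
move: zA yA; rewrite !in_fsetD1 => /and3P[zy zx zA] /andP[yx yA].
by exists x, y, z; split; split; rewrite // eq_sym.
Qed.

End FsetCard.

Section Annihilators.
Variable R : comPzRingType.
Implicit Types a b c t u v w x y z : R.

Lemma annC x y : ann x y = ann y x.
Proof. by rewrite /ann /= mulrC. Qed.

Lemma ann_opp x : ann (- x) = ann x.
Proof.
apply/seteqP; split => t; rewrite /ann /= mulNr; last by move=> ->; rewrite oppr0.
by move/eqP; rewrite oppr_eq0 => /eqP.
Qed.

Lemma zdivs_mul0 x y : x != 0 -> y != 0 -> x * y = 0 -> zdivs R x.
Proof. by move=> x0 y0 xy; split => //; exists y. Qed.

Lemma eclass_eq x y : eclass x = eclass y <-> ann x = ann y.
Proof.
split=> [E|E]; last by rewrite /eclass E.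
by have : eclass x x by []; rewrite E.
Qed.

Lemma eclass_vertex x : zdivs R x -> GE_vertices R (eclass x).
Proof. by exists x. Qed.

Lemma GE_adj_sym (U V : set R) : GE_adj U V -> GE_adj V U.
Proof.
case=> UV [x [y [zx [zy [EU [EV xy]]]]]]; split; first by move=> /esym.
by exists y, x; rewrite mulrC.
Qed.

Lemma GE_adj_eclass a c : zdivs R a -> zdivs R c ->
  GE_adj (eclass a) (eclass c) <-> ann a <> ann c /\ a * c = 0.
Proof.
move=> za zc; split; last by case=> ac e; split; [move/eclass_eq|exists a, c].
case=> /eclass_eq ac [x [y [_ [_ [/eclass_eq ax [/eclass_eq cy xy]]]]]].
split=> //; have : ann y a by rewrite annC ax.
by rewrite -cy annC.
Qed.

Definition ann_maximal b :=
  zdivs R b /\ forall z, zdivs R z -> ann b `<=` ann z -> ann z = ann b.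

Lemma exists_ann_maximal (fV : finite_set (GE_vertices R)) x : zdivs R x ->
  exists2 b, ann_maximal b & ann x `<=` ann b.
Proof.
move=> zx.
have finA : finite_set ((@ann R) @` zdivs R).
  suff -> : (@ann R) @` zdivs R = (fun V => \bigcap_(y in V) ann y) @` GE_vertices R.
    exact: finite_image.
  rewrite /GE_vertices image_comp; apply: eq_imagel => y _ /=.
  apply/seteqP; split => t; first by move=> yt z /= ->.
  by apply.
have [_ [b zb <-] [sxb maxb]] := finite_maximal_above finA (ex_intro2 _ _ x zx erefl).
by exists b => //; split => // z zz sbz; apply: maxb => //; exists z.
Qed.

End Annihilators.

Section RegularGraph.
Variable R : comPzRingType.
Hypothesis finV : finite_set (GE_vertices R).
Hypothesis regV : GE_regular R.
Implicit Types a b c d t u v w x y z : R.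

Lemma in_GE_nbhd (U V : set R) :
  (V \in fset_set (GE_nbhd U)) = (V \in GE_nbhd U).
Proof. by rewrite in_fset_set //; apply: sub_finite_set finV => W []. Qed.

(* [ann a `<=` ann b] gives N([a]) \ [b] `<=` N([b]) \ [a]; equal degrees make it
   an equality. *)
Lemma mul0_of_ann_proper a b z : zdivs R a -> zdivs R b -> ann a `<` ann b ->
  zdivs R z -> ann z <> ann a -> ann z <> ann b -> b * z = 0 -> a * z = 0.
Proof.
move=> za zb [sab nba] zz nza nzb bz.
have sub : (fset_set (GE_nbhd (eclass a)) `\ eclass b
            `<=` fset_set (GE_nbhd (eclass b)) `\ eclass a)%fset.
  apply/fsubsetP => V; rewrite !in_fsetD1 !in_GE_nbhd.
  move=> /andP[VB /set_mem [[v zv EV] adj]]; subst V.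
  have [av e] := (GE_adj_eclass za zv).1 adj.
  apply/andP; split; first by apply/eqP => /eclass_eq /esym.
  apply: mem_set; split; first exact: eclass_vertex.
  apply/(GE_adj_eclass zb zv); split; last exact: (sab v e).
  by move=> E; move/eqP: VB; apply; apply/eclass_eq.
have ba : (eclass b \in fset_set (GE_nbhd (eclass a)))
        = (eclass a \in fset_set (GE_nbhd (eclass b))).
  by rewrite !in_GE_nbhd; apply/idP/idP => /set_mem [_ /GE_adj_sym adj];
    apply: mem_set; split => //; apply: eclass_vertex.
have zY : eclass z \in (fset_set (GE_nbhd (eclass b)) `\ eclass a)%fset.
  rewrite in_fsetD1 in_GE_nbhd; apply/andP; split; first by apply/eqP => /eclass_eq.
  apply: mem_set; split; first exact: eclass_vertex.
  by apply/(GE_adj_eclass zb zz); split => // /esym.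
rewrite -(fsetD1_eq_of_card (regV (eclass_vertex za) (eclass_vertex zb)) ba sub) in zY.
move: zY; rewrite in_fsetD1 in_GE_nbhd => /andP[_ /set_mem [_ adj]].
by have [] := (GE_adj_eclass za zz).1 adj.
Qed.

Section BelowMaximal.
Variables a b : R.
Hypotheses (za : zdivs R a) (maxb : ann_maximal b) (ltab : ann a `<` ann b).

Lemma ann_setD_cases z : ann b z -> ~ ann a z -> ann z = ann a \/ ann z = ann b.
Proof.
move=> bz naz; have [b0 _] := maxb.1.
have z0 : z != 0 by apply/eqP => z0; apply: naz; rewrite z0 /ann /= mulr0.
have zz : zdivs R z by apply: zdivs_mul0 z0 b0 _; rewrite mulrC.
apply: contrapT => /not_orP [nza nzb]; apply: naz.
exact: mul0_of_ann_proper za maxb.1 ltab zz nza nzb bz.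
Qed.

(* The class [b] is ruled out by perturbing [z] with a nonzero element of [ann a]. *)
Lemma ann_setD_eq z : ann b z -> ~ ann a z -> ann z = ann a.
Proof.
move=> bz naz; case: (ann_setD_cases bz naz) => // zb.
have nba : ~ ann b a by rewrite -zb annC.
have [a0 [w [w0 aw]]] := za.
have bzw : ann b (z + w) by rewrite /ann /= mulrDr bz (properW ltab aw) addr0.
have nazw : ~ ann a (z + w) by rewrite /ann /= mulrDr aw addr0.
case: (ann_setD_cases bzw nazw) => zwE.
  by case: nba; rewrite annC -zwE annC.
have zw : zdivs R w by apply: zdivs_mul0 w0 a0 _; rewrite mulrC.
have sbw : ann b `<=` ann w.
  move=> t bt; have zt : ann z t by rewrite zb.
  have : ann (z + w) t by rewrite zwE.
  by rewrite /ann /= mulrDl zt add0r.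
by case: nba; rewrite -(maxb.2 _ zw sbw) annC.
Qed.

Lemma exists_ann_setD : exists z, ann b z /\ ~ ann a z.
Proof.
apply: contrapT => noz; apply: ltab.2 => t bt.
by apply: contrapT => nat; apply: noz; exists t.
Qed.

Lemma mul_below_maximal : a * b = 0.
Proof.
have [z [bz naz]] := exists_ann_setD.
by change (ann a b); rewrite -(ann_setD_eq bz naz) annC.
Qed.

Lemma sqr_below_maximal_neq0 : a * a != 0.
Proof.
have [z [bz naz]] := exists_ann_setD.
by apply/eqP => aa; apply: (naz); rewrite annC (ann_setD_eq bz naz).
Qed.

Lemma ann_mul_below_maximal u w : ann a u -> ann a w -> u * w = 0.
Proof.
move=> au aw; have [z [bz naz]] := exists_ann_setD.
have bzw : ann b (z + w) by rewrite /ann /= mulrDr bz (properW ltab aw) addr0.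
have nazw : ~ ann a (z + w) by rewrite /ann /= mulrDr aw addr0.
have zu : ann z u by rewrite (ann_setD_eq bz naz).
have : ann (z + w) u by rewrite (ann_setD_eq bzw nazw).
by rewrite /ann /= mulrDl zu add0r mulrC.
Qed.

End BelowMaximal.

Section ProperBelowMaximal.
Variables a b : R.
Hypotheses (za : zdivs R a) (maxb : ann_maximal b) (ltab : ann a `<` ann b).

Lemma ann_eq_maximal_of_mul0 w : zdivs R w -> a * w = 0 -> ann w = ann b.
Proof.
move=> zw aw; have aa := sqr_below_maximal_neq0 za maxb ltab.
have saw : ann a `<=` ann w.
  by move=> t at'; exact: (@ann_mul_below_maximal _ _ za maxb ltab w t aw at').
have [y maxy swy] := exists_ann_maximal finV zw.
have ltay : ann a `<` ann y.
  split=> [t /saw /swy //|say]; move/eqP: aa; apply.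
  by apply: say; apply: swy; rewrite annC.
have syb : ann y `<=` ann b.
  move=> t yt; have [at'|nat] := pselect (ann a t); first exact: (properW ltab).
  rewrite annC (ann_setD_eq za maxy ltay yt nat).
  exact: mul_below_maximal za maxb ltab.
have swb : ann w `<=` ann b by rewrite (maxy.2 _ maxb.1 syb).
rewrite eqEsubset; split => //; apply: contrapT => nbw.
have wa : ann w a by rewrite annC.
by move/eqP: aa; apply; exact: (@ann_mul_below_maximal _ _ zw maxb (conj swb nbw) a a wa wa).
Qed.

Lemma ann_cases_below_maximal d : zdivs R d -> ann b d ->
  ann d = ann a \/ ann d = ann b.
Proof.
move=> zd bd; have [ad|nad] := pselect (ann a d).
  by right; exact: ann_eq_maximal_of_mul0.
by left; exact: (@ann_setD_eq _ _ za maxb ltab d bd nad).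
Qed.

Lemma ann_cases_of_proper c : zdivs R c -> ann c = ann a \/ ann c = ann b.
Proof.
move=> zc; have [b0 _] := maxb.1.
have [bc|nbc] := eqVneq (b * c) 0; first exact: ann_cases_below_maximal.
exfalso; have ab : ann a b := mul_below_maximal za maxb ltab.
have bb : b * b = 0 := @ann_mul_below_maximal _ _ za maxb ltab b b ab ab.
have cb0 : c * b != 0 by rewrite mulrC.
have zcb : zdivs R (c * b) by apply: zdivs_mul0 cb0 b0 _; rewrite -mulrA bb mulr0.
have cbE : ann (c * b) = ann b.
  by apply: (maxb.2 _ zcb) => t bt; rewrite /ann /= -mulrA bt mulr0.
have [c0 [d [d0 cd]]] := zc.
have bd : ann b d by rewrite -cbE /ann /= mulrAC cd mul0r.
have zd : zdivs R d by apply: zdivs_mul0 d0 c0 _; rewrite mulrC.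
have dc : ann d c by rewrite annC.
move/eqP: nbc; apply; change (ann b c).
by case: (ann_cases_below_maximal zd bd) => dE; [apply: (properW ltab)|]; rewrite -dE.
Qed.

End ProperBelowMaximal.

End RegularGraph.

Section Antichain.
Variable R : comPzRingType.
Hypothesis ann_antichain : forall x y : R, zdivs R x -> zdivs R y ->
  ann x `<=` ann y -> ann x = ann y.
Implicit Types k t x y : R.

(* Otherwise [x * y] would be a zero divisor whose annihilator contains both
   [ann x] and [ann y]. *)
Lemma mul_eq0_of_ann_neq x y : zdivs R x -> zdivs R y -> ann x <> ann y ->
  x * y = 0.
Proof.
move=> zx zy nxy; apply: contrapT => /eqP xy0.
have [_ [t [t0 xt]]] := zx.
have zxy : zdivs R (x * y) by apply: zdivs_mul0 xy0 t0 _; rewrite mulrAC xt mul0r.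
have sx : ann x `<=` ann (x * y) by move=> s xs; rewrite /ann /= mulrAC xs mul0r.
have sy : ann y `<=` ann (x * y) by move=> s ys; rewrite /ann /= -mulrA ys mulr0.
by apply: nxy; rewrite (ann_antichain zx zxy sx) (ann_antichain zy zxy sy).
Qed.

(* The third class makes [x + y] a zero divisor; whichever of [x], [y] it is
   not equivalent to must annihilate it. *)
Lemma sqr_eq0_of_three_classes x y k : zdivs R x -> zdivs R y -> zdivs R k ->
  ann x <> ann y -> ann x <> ann k -> ann y <> ann k -> x * x = 0 \/ y * y = 0.
Proof.
move=> zx zy zk nxy nxk nyk; have [k0 _] := zk.
have xyk : (x + y) * k = 0.
  by rewrite mulrDl !mul_eq0_of_ann_neq // addr0.
have xy0 : x + y != 0.
  apply/eqP => /eqP; rewrite addr_eq0 => /eqP xE.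
  by apply: nxy; rewrite xE ann_opp.
have zxy : zdivs R (x + y) := zdivs_mul0 xy0 k0 xyk.
have [xyE|nxyx] := pselect (ann (x + y) = ann x).
  right; have : (x + y) * y = 0 by apply: mul_eq0_of_ann_neq; rewrite ?xyE.
  by rewrite mulrDl mul_eq0_of_ann_neq // add0r.
left; have : (x + y) * x = 0 by apply: mul_eq0_of_ann_neq.
by rewrite mulrDl [y * x]mul_eq0_of_ann_neq ?addr0 // => /esym.
Qed.

Lemma ann_eq_of_sqr_eq0 x y : zdivs R x -> x * x = 0 -> zdivs R y ->
  ann y = ann x.
Proof.
move=> zx xx zy; apply: ann_antichain => // t yt.
have [->|t0] := eqVneq t 0; first by rewrite /ann /= mulr0.
have zt : zdivs R t by apply: zdivs_mul0 t0 zy.1 _; rewrite mulrC.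
rewrite annC; have [->|ntx] := pselect (ann t = ann x); first exact: xx.
exact: mul_eq0_of_ann_neq.
Qed.

Lemma antichain_no_three_classes a1 a2 a3 :
  [/\ zdivs R a1, zdivs R a2 & zdivs R a3] ->
  [/\ ann a1 <> ann a2, ann a1 <> ann a3 & ann a2 <> ann a3] -> False.
Proof.
move=> [z1 z2 z3] [n12 n13 n23]; apply: (n12).
case: (sqr_eq0_of_three_classes z1 z2 z3 n12 n13 n23) => sq.
  by rewrite (ann_eq_of_sqr_eq0 z1 sq z2).
by rewrite (ann_eq_of_sqr_eq0 z2 sq z1).
Qed.

End Antichain.

Lemma three_ann_classes (R : comPzRingType) : finite_set (GE_vertices R) ->
  (2 < #|` fset_set (GE_vertices R)|)%N ->
  exists a1 a2 a3 : R, [/\ zdivs R a1, zdivs R a2 & zdivs R a3] /\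
    [/\ ann a1 <> ann a2, ann a1 <> ann a3 & ann a2 <> ann a3].
Proof.
move=> finV /card_gt2_fset [X [Y [Z []]]].
rewrite !in_fset_set // => -[/set_mem [a1 z1 <-] /set_mem [a2 z2 <-] /set_mem [a3 z3 <-]].
move=> [/eqP n12 /eqP n13 /eqP n23]; exists a1, a2, a3; split => //.
by split=> /eclass_eq; [exact: n12|exact: n13|exact: n23].
Qed.

Theorem proposition1p10 (R : comPzRingType) :
  noetherian R ->
  finite_set (GE_vertices R) ->
  (2 < #|` fset_set (GE_vertices R)|%fset)%N ->
  ~ GE_regular R.
Proof.
move=> _ finV /(three_ann_classes finV) [a1 [a2 [a3 [zs [n12 n13 n23]]]]] regV.
have [[x [y [zx zy ltxy]]]|nochain] :=
  pselect (exists x y : R, [/\ zdivs R x, zdivs R y & ann x `<` ann y]).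
  have [b maxb syb] := exists_ann_maximal finV zy.
  have cls := ann_cases_of_proper finV regV zx maxb (proper_sub_trans ltxy syb).
  case: zs => z1 z2 z3; move: n12 n13 n23.
  case: (cls _ z1) (cls _ z2) (cls _ z3) => -> [] -> [] -> h12 h13 h23;
    by [apply: h12|apply: h13|apply: h23].
apply: (antichain_no_three_classes _ zs (And3 n12 n13 n23)) => x y zx zy sxy.
rewrite eqEsubset; split => //; apply: contrapT => nyx.
by apply: nochain; exists x, y.
Qed.
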